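(* Let $M,K$ be positive integers and let $R_1,\dots,R_n$ be positive integers with $R_i<2^K$. Let $s_i\in\{0,1,\dots,R_i-1\}$ for $i=1,\dots,n$. Starting from state $c_0=2^M$ and empty bit-stream $\mathtt{bs}_0$, encode $s_1,\dots,s_n$ in order with the UBCS encoder, where $s_i$ is encoded using $U(0,R_i)$, and let $c_i,\mathtt{bs}_i$ denote the state and bit-stream after encoding $s_i$. Then, starting from $(c_n,\mathtt{bs}_n)$, decode sequentially with the UBCS decoder using $U(0,R_n),U(0,R_{n-1}),\dots,U(0,R_1)$, obtaining symbols $s'_n,s'_{n-1},\dots,s'_1$, and let $c'_i,\mathtt{bs}'_i$ denote the state and bit-stream after decoding $s'_{i+1}$. Then: (P1) $s'_{i+1}=s_{i+1}$, $c'_i=c_i$ and $\mathtt{bs}'_i=\mathtt{bs}_i$ for all $i=0,\dots,n-1$. (P2) Letting $l_i=\lceil\log c_i\rceil+\mathtt{len}(\mathtt{bs}_i)$, where $\mathtt{len}$ is the total number of bits in the bit-stream, $$l_n-l_0<\frac{1}{1-1/(\ln 2\cdot 2^M\cdot K)}\Big[\sum_{i=1}^n\log R_i+1+(\ln 2\cdot 2^M)^{-1}\Big].$$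
   Context: All logarithms $\log$ are base 2. The Uniform Base Conversion System (UBCS) has an integer state $c$ and a bit-stream $\mathtt{bs}$, which is a stack of $K$-bit chunks. ENCODE a symbol $s\in\{0,\dots,R-1\}$ using $U(0,R)$ (with $R<2^K$): set $c\gets c\cdot R+s$; if $c\ge 2^{M+K}$, push the $K$-bit value $c\bmod 2^K$ onto the end of $\mathtt{bs}$ and set $c\gets\lfloor c/2^K\rfloor$; return $(c,\mathtt{bs})$. DECODE using $U(0,R)$ (with $R<2^K$): if $c<2^M\cdot R$, pop the last $K$-bit value $r$ from $\mathtt{bs}$ and set $c\gets 2^K\cdot c+r$; then set $s\gets c\bmod R$ and $c\gets\lfloor c/R\rfloor$; return $(s,c,\mathtt{bs})$. *)

From Stdlib Require Import Reals Lra Lia List Arith.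
Import ListNotations.
Open Scope R_scope.

Definition log2R (x : R) : R := ln x / ln 2.

(* ceiling: Int_part is the floor, so ceil x = - floor (- x) *)
Definition ceilR (x : R) : Z := (- Int_part (- x))%Z.

(* UBCS state: integer c and bit-stream bs, a stack of K-bit chunks
   (list of naturals < 2^K; the end of the list is the top). *)
Definition ubcs_state : Type := (nat * list nat)%type.

Definition ubcs_encode (M K R s : nat) (st : ubcs_state) : ubcs_state :=
  let c := (fst st * R + s)%nat in
  if (2 ^ (M + K) <=? c)%nat
  then (c / 2 ^ K, snd st ++ [c mod 2 ^ K])%nat
  else (c, snd st).

(* DECODE with U(0,R): returns (symbol, new state).  Popping from an empty
   stream (which never happens in the theorem) yields r = 0. *)
Definition ubcs_decode (M K R : nat) (st : ubcs_state) : nat * ubcs_state :=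
  let '(c0, bs0) := st in
  let '(c, bs) :=
    if (c0 <? 2 ^ M * R)%nat
    then ((2 ^ K * c0 + last bs0 0)%nat, removelast bs0)
    else (c0, bs0) in
  ((c mod R)%nat, ((c / R)%nat, bs)).

Fixpoint enc_states (M K : nat) (Rs ss : nat -> nat) (i : nat) : ubcs_state :=
  match i with
  | O => (2 ^ M, [])%nat
  | S j => ubcs_encode M K (Rs (S j)) (ss (S j)) (enc_states M K Rs ss j)
  end.

(* After k decoding steps starting from (c_n, bs_n), using
   U(0,R_n), ..., U(0,R_{n-k+1}): returns (s'_{n-k+1}, (c'_{n-k}, bs'_{n-k}))
   (the symbol component is meaningless for k = 0). *)
Fixpoint dec_states (M K : nat) (Rs ss : nat -> nat) (n k : nat)
  : nat * ubcs_state :=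
  match k with
  | O => (0%nat, enc_states M K Rs ss n)
  | S k' => ubcs_decode M K (Rs (n - k')%nat) (snd (dec_states M K Rs ss n k'))
  end.

Definition ubcs_len (K : nat) (st : ubcs_state) : R :=
  IZR (ceilR (log2R (INR (fst st)))) + INR (K * length (snd st)).

(* Encoding maps c to c R + s and, whenever this reaches 2^(M+K), pushes its low K
   bits; this keeps 2^M <= c < 2^(M+K), so the decoder's test c < 2^M R
   recognises exactly the steps that pushed, and decoding undoes encoding.
   For the length, the amortized potential log(c + 1) + (K - 1/(ln 2 2^M)) #bs
   grows by at most log R per symbol: a push divides by 2^K a number at least
   2^(M+K), and the rounding costs at most log(1 + 2^-M) <= 1/(ln 2 2^M) bits.
   Since every chunk contributes K bits to the length, the total rounding cost
   is at most a fraction 1/(ln 2 2^M K) of the length, whence the factor. *)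

From Stdlib Require Import Reals List Arith Lia Lra.
Import ListNotations.
Open Scope R_scope.

Section EncodeStep.

Variables (M K R s : nat).
Hypothesis hs : (s < R)%nat.

Lemma ubcs_encode_in_range (c : nat) (bs : list nat) :
  (R <= 2 ^ K)%nat -> (2 ^ M <= c < 2 ^ (M + K))%nat ->
  (2 ^ M <= fst (ubcs_encode M K R s (c, bs)) < 2 ^ (M + K))%nat.
Proof.
  intros HR Hc. unfold ubcs_encode; simpl.
  rewrite Nat.pow_add_r in *.
  assert (HQ : (2 ^ K <> 0)%nat) by (apply Nat.pow_nonzero; lia).
  destruct (2 ^ M * 2 ^ K <=? c * R + s)%nat eqn:Hpush; simpl.
  - apply Nat.leb_le in Hpush. split.
    + apply Nat.div_le_lower_bound; lia.
    + apply Nat.Div0.div_lt_upper_bound. nia.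
  - apply Nat.leb_gt in Hpush. nia.
Qed.

Lemma ubcs_decode_encode (c : nat) (bs : list nat) :
  (2 ^ M <= c < 2 ^ (M + K))%nat ->
  ubcs_decode M K R (ubcs_encode M K R s (c, bs)) = (s, (c, bs)).
Proof.
  intros Hc. unfold ubcs_encode; simpl.
  rewrite Nat.pow_add_r in *.
  assert (HQ : (2 ^ K <> 0)%nat) by (apply Nat.pow_nonzero; lia).
  assert (Hdiv : ((c * R + s) / R = c)%nat) by (symmetry; apply (Nat.div_unique _ _ _ s); lia).
  assert (Hmod : ((c * R + s) mod R = s)%nat) by (symmetry; apply (Nat.mod_unique _ _ c); lia).
  destruct (2 ^ M * 2 ^ K <=? c * R + s)%nat eqn:Hpush.
  - apply Nat.leb_le in Hpush.
    assert (Hpop : ((c * R + s) / 2 ^ K < 2 ^ M * R)%nat)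
      by (apply Nat.Div0.div_lt_upper_bound; nia).
    apply Nat.ltb_lt in Hpop. simpl. rewrite Hpop, last_last, removelast_last.
    rewrite <- Nat.div_mod_eq, Hdiv, Hmod. reflexivity.
  - apply Nat.leb_gt in Hpush.
    assert (Hnopop : (2 ^ M * R <= c * R + s)%nat) by nia.
    apply Nat.ltb_ge in Hnopop. simpl. rewrite Hnopop, Hdiv, Hmod. reflexivity.
Qed.

End EncodeStep.

Section Encoding.

Variables (M K n : nat) (Rs ss : nat -> nat).
Hypothesis hK : (0 < K)%nat.
Hypothesis hR : forall i, (1 <= i <= n)%nat -> (Rs i <= 2 ^ K)%nat.
Hypothesis hs : forall i, (1 <= i <= n)%nat -> (ss i < Rs i)%nat.

Lemma enc_states_in_range (i : nat) : (i <= n)%nat ->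
  (2 ^ M <= fst (enc_states M K Rs ss i) < 2 ^ (M + K))%nat.
Proof.
  induction i as [|i IH]; intros Hi; simpl.
  - split; [lia | apply Nat.pow_lt_mono_r; lia].
  - destruct (enc_states M K Rs ss i) as [c bs].
    apply ubcs_encode_in_range; [apply hs; lia | apply hR; lia | apply IH; lia].
Qed.

Lemma dec_states_step (k : nat) : (k < n)%nat ->
  snd (dec_states M K Rs ss n k) = enc_states M K Rs ss (n - k) ->
  dec_states M K Rs ss n (S k) = (ss (n - k)%nat, enc_states M K Rs ss (n - S k)).
Proof.
  intros Hk Hprev. cbn [dec_states]. rewrite Hprev.
  replace (n - k)%nat with (S (n - S k)) by lia. cbn [enc_states].
  pose proof (enc_states_in_range (n - S k) ltac:(lia)) as Hrange.
  destruct (enc_states M K Rs ss (n - S k)) as [c bs].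
  apply ubcs_decode_encode; [apply hs; lia | exact Hrange].
Qed.

Lemma dec_states_succ (k : nat) : (k < n)%nat ->
  dec_states M K Rs ss n (S k) = (ss (n - k)%nat, enc_states M K Rs ss (n - S k)).
Proof.
  induction k as [|k IH]; intros Hk; apply dec_states_step; try lia.
  - cbn. now rewrite Nat.sub_0_r.
  - now rewrite IH by lia.
Qed.

End Encoding.

Lemma ln_le (x y : R) : 0 < x -> x <= y -> ln x <= ln y.
Proof.
  intros Hx [Hlt | ->]; [left; apply ln_increasing | right]; auto.
Qed.

Lemma ln_le_sub_1 (x : R) : 0 < x -> ln x <= x - 1.
Proof.
  intros Hx. rewrite <- (ln_exp (x - 1)).
  apply ln_le; [exact Hx | pose proof (exp_ineq1_le (x - 1)); lra].
Qed.

Lemma ln2_pos : 0 < ln 2.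
Proof. pose proof ln_lt_2; lra. Qed.

Lemma INR_pow2 (k : nat) : INR (2 ^ k) = 2 ^ k.
Proof. rewrite pow_INR. reflexivity. Qed.

Lemma log2R_le (x y : R) : 0 < x -> x <= y -> log2R x <= log2R y.
Proof.
  intros Hx Hxy. unfold log2R, Rdiv.
  apply Rmult_le_compat_r; [left; apply Rinv_0_lt_compat, ln2_pos | now apply ln_le].
Qed.

Lemma log2R_mult (x y : R) : 0 < x -> 0 < y -> log2R (x * y) = log2R x + log2R y.
Proof. intros Hx Hy. unfold log2R. rewrite ln_mult by assumption. lra. Qed.

Lemma log2R_pow2 (k : nat) : log2R (2 ^ k) = INR k.
Proof.
  unfold log2R. rewrite ln_pow by lra. field. apply Rgt_not_eq, ln2_pos.
Qed.

Lemma log2R_add_le (y d : R) : 0 < y -> 0 <= d ->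
  log2R (y + d) <= log2R y + d / (ln 2 * y).
Proof.
  intros Hy Hd. pose proof ln2_pos as Hln2.
  replace (y + d) with (y * (1 + d / y)) by (field; lra).
  assert (Hdy : 0 <= d / y) by (apply Rmult_le_pos; [lra | left; now apply Rinv_0_lt_compat]).
  rewrite log2R_mult by lra.
  apply Rplus_le_compat_l. unfold log2R.
  replace (d / (ln 2 * y)) with ((1 + d / y - 1) / ln 2) by (field; lra).
  apply Rmult_le_compat_r; [left; apply Rinv_0_lt_compat, Hln2|].
  apply ln_le_sub_1; lra.
Qed.

Lemma log2R_add_le_inv (P Q y : R) : 0 < P -> 0 < Q -> P * Q <= y ->
  log2R (y + Q) <= log2R y + / (ln 2 * P).
Proof.
  intros HP HQ Hy. pose proof ln2_pos as Hln2.
  assert (HPQ : 0 < P * Q) by now apply Rmult_lt_0_compat.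
  eapply Rle_trans; [apply log2R_add_le; lra|].
  apply Rplus_le_compat_l.
  replace (/ (ln 2 * P)) with (Q / (ln 2 * (P * Q))) by (field; lra).
  unfold Rdiv. apply Rmult_le_compat_l; [lra|].
  apply Rinv_le_contravar; [apply Rmult_lt_0_compat|apply Rmult_le_compat_l]; lra.
Qed.

Lemma log2R_pow2_add_1 (M : nat) : log2R (2 ^ M + 1) <= INR M + / (ln 2 * 2 ^ M).
Proof.
  rewrite <- log2R_pow2, <- (Rmult_1_l (/ _)).
  apply log2R_add_le; [apply pow_lt|]; lra.
Qed.

Lemma log2R_S_ge (M c : nat) : (2 ^ M <= c)%nat -> INR M <= log2R (INR c + 1).
Proof.
  intros Hc. apply le_INR in Hc. rewrite INR_pow2 in Hc.
  rewrite <- log2R_pow2. apply log2R_le; [apply pow_lt|]; lra.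
Qed.

Lemma ln2_pow2_mul_gt_1 (M K : nat) : (0 < M)%nat -> (0 < K)%nat ->
  1 < ln 2 * 2 ^ M * INR K.
Proof.
  intros hM hK. pose proof ln_lt_2.
  assert (HM : 2 <= 2 ^ M) by (rewrite <- (pow_1 2) at 1; apply Rle_pow; [lra | lia]).
  assert (HK : 1 <= INR K) by (apply (le_INR 1); lia).
  assert (1 < ln 2 * 2 ^ M) by nra.
  nra.
Qed.

Lemma ceilR_bounds (x : R) : x <= IZR (ceilR x) < x + 1.
Proof. unfold ceilR. rewrite opp_IZR. pose proof (base_Int_part (- x)). lra. Qed.

Lemma ceilR_INR (m : nat) : IZR (ceilR (INR m)) = INR m.
Proof.
  unfold ceilR. rewrite <- (Int_part_spec (- INR m) (- Z.of_nat m)).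
  - now rewrite Z.opp_involutive, INR_IZR_INZ.
  - rewrite opp_IZR, <- INR_IZR_INZ. lra.
Qed.

Lemma ubcs_len_init (M K : nat) : ubcs_len K (2 ^ M, [])%nat = INR M.
Proof.
  unfold ubcs_len; cbn [fst snd length].
  rewrite INR_pow2, log2R_pow2, ceilR_INR, Nat.mul_0_r. simpl. lra.
Qed.

Lemma ubcs_len_lt (K c : nat) (bs : list nat) : (0 < c)%nat ->
  ubcs_len K (c, bs) < log2R (INR c + 1) + 1 + INR K * INR (length bs).
Proof.
  intros Hc. apply lt_0_INR in Hc.
  unfold ubcs_len; cbn [fst snd]. rewrite mult_INR.
  pose proof (ceilR_bounds (log2R (INR c))).
  pose proof (log2R_le (INR c) (INR c + 1) Hc ltac:(lra)).
  lra.
Qed.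

Definition amortized_potential (M K : nat) (st : ubcs_state) : R :=
  log2R (INR (fst st) + 1) + (INR K - / (ln 2 * 2 ^ M)) * INR (length (snd st)).

Lemma log2R_push_le (M K c R s : nat) : (2 ^ (M + K) <= c * R + s)%nat -> (s < R)%nat ->
  log2R (INR ((c * R + s) / 2 ^ K) + 1) + INR K
  <= log2R ((INR c + 1) * INR R) + / (ln 2 * 2 ^ M).
Proof.
  intros Hpush hs. rewrite Nat.pow_add_r in Hpush.
  set (x := (c * R + s)%nat) in *.
  assert (HQ : (2 ^ K <> 0)%nat) by (apply Nat.pow_nonzero; lia).
  assert (Hround : (2 ^ K * (x / 2 ^ K + 1) <= (c + 1) * R + 2 ^ K)%nat)
    by (pose proof (Nat.Div0.mul_div_le x (2 ^ K)); unfold x in *; nia).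
  assert (Hlarge : (2 ^ M * 2 ^ K <= (c + 1) * R)%nat) by (unfold x in *; nia).
  apply le_INR in Hround, Hlarge.
  repeat rewrite ?mult_INR, ?plus_INR, ?INR_pow2 in Hround.
  repeat rewrite ?mult_INR, ?plus_INR, ?INR_pow2 in Hlarge.
  simpl INR in Hround, Hlarge.
  pose proof (pos_INR (x / 2 ^ K)). pose proof (pow_lt 2 K ltac:(lra)).
  rewrite <- (log2R_pow2 K), Rplus_comm, <- log2R_mult by lra.
  eapply Rle_trans; [apply log2R_le; [nra | exact Hround]|].
  apply log2R_add_le_inv; [apply pow_lt; lra | lra | exact Hlarge].
Qed.

Lemma amortized_potential_encode (M K R s : nat) (st : ubcs_state) : (s < R)%nat ->
  amortized_potential M K (ubcs_encode M K R s st)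
  <= amortized_potential M K st + log2R (INR R).
Proof.
  intros hs. destruct st as [c bs].
  unfold amortized_potential, ubcs_encode; simpl.
  assert (HR : 0 < INR R) by (apply lt_0_INR; lia).
  assert (Hc : 0 < INR c + 1) by (pose proof (pos_INR c); lra).
  assert (Hsplit : log2R ((INR c + 1) * INR R) = log2R (INR c + 1) + log2R (INR R))
    by now apply log2R_mult.
  destruct (2 ^ (M + K) <=? c * R + s)%nat eqn:Hpush; simpl.
  - apply Nat.leb_le in Hpush.
    pose proof (log2R_push_le M K c R s Hpush hs).
    rewrite length_app, plus_INR. simpl (INR (length [_])).
    lra.
  - assert (Hnopush : (c * R + s + 1 <= (c + 1) * R)%nat) by nia.
    apply le_INR in Hnopush. repeat rewrite ?mult_INR, ?plus_INR in Hnopush. simpl INR in Hnopush.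
    enough (log2R (INR (c * R + s) + 1) <= log2R ((INR c + 1) * INR R)) by lra.
    apply log2R_le; [pose proof (pos_INR (c * R + s)); lra|].
    rewrite plus_INR, mult_INR. lra.
Qed.

Lemma telescope_le_sum (g f : nat -> R) (m n : nat) :
  (forall j, (m <= j < m + n)%nat -> g (S j) - g j <= f (S j)) ->
  g (m + n)%nat - g m <= fold_right Rplus 0 (map f (seq (S m) n)).
Proof.
  revert m; induction n as [|n IH]; intros m Hstep; simpl.
  - rewrite Nat.add_0_r. lra.
  - rewrite Nat.add_succ_r, <- Nat.add_succ_l.
    assert (Hrest := IH (S m) ltac:(intros j Hj; apply Hstep; lia)).
    assert (Hfirst := Hstep m ltac:(lia)).
    lra.
Qed.

Lemma amortized_potential_enc_states (M K n : nat) (Rs ss : nat -> nat) :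
  (forall i, (1 <= i <= n)%nat -> (ss i < Rs i)%nat) ->
  amortized_potential M K (enc_states M K Rs ss n)
  - amortized_potential M K (enc_states M K Rs ss 0)
  <= fold_right Rplus 0 (map (fun i => log2R (INR (Rs i))) (seq 1 n)).
Proof.
  intros hs.
  apply (telescope_le_sum (fun i => amortized_potential M K (enc_states M K Rs ss i))
                          _ 0 n).
  intros j Hj. cbn [enc_states].
  pose proof (amortized_potential_encode M K (Rs (S j)) (ss (S j))
                (enc_states M K Rs ss j) ltac:(apply hs; lia)).
  lra.
Qed.

Lemma amortization_bound (a k S D b l : R) : 0 < a -> 1 < a * k ->
  D <= S + / a + b / a -> k * b <= D -> l < D + 1 ->
  l < 1 / (1 - 1 / (a * k)) * (S + 1 + / a).
Proof.
  intros Ha Hak HD Hb Hl.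
  set (u := 1 / (a * k)).
  assert (Hu : 0 < u < 1).
  { unfold u. split; [apply Rdiv_lt_0_compat; lra|].
    unfold Rdiv. rewrite Rmult_1_l, <- Rinv_1 at 1. apply Rinv_1_lt_contravar; lra. }
  assert (Hk : 0 < k) by nra.
  assert (Hba : b / a = u * (k * b)) by (unfold u; field; lra).
  assert (Hshrink : (D + 1) * (1 - u) <= S + 1 + / a) by nra.
  apply Rlt_le_trans with (D + 1); [exact Hl|].
  replace (D + 1) with (1 / (1 - u) * ((D + 1) * (1 - u))) by (field; lra).
  apply Rmult_le_compat_l; [left; apply Rdiv_lt_0_compat|]; lra.
Qed.

Theorem theorem1 (M K n : nat) (Rs ss : nat -> nat)
  (hM : (0 < M)%nat) (hK : (0 < K)%nat)
  (hR : forall i, (1 <= i <= n)%nat -> (0 < Rs i /\ Rs i < 2 ^ K)%nat)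
  (hs : forall i, (1 <= i <= n)%nat -> (ss i < Rs i)%nat) :
  (forall i, (i < n)%nat ->
     fst (dec_states M K Rs ss n (n - i)) = ss (S i) /\
     snd (dec_states M K Rs ss n (n - i)) = enc_states M K Rs ss i)
  /\
  ubcs_len K (enc_states M K Rs ss n) - ubcs_len K (enc_states M K Rs ss 0)
  < 1 / (1 - 1 / (ln 2 * 2 ^ M * INR K)) *
    (fold_right Rplus 0 (map (fun i => log2R (INR (Rs i))) (seq 1 n))
     + 1 + / (ln 2 * 2 ^ M)).
Proof.
  assert (hR' : forall i, (1 <= i <= n)%nat -> (Rs i <= 2 ^ K)%nat)
    by (intros i Hi; apply Nat.lt_le_incl, hR, Hi).
  split.
  - intros i Hi. replace (n - i)%nat with (S (n - S i)) by lia.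
    rewrite (dec_states_succ M K n Rs ss hK hR' hs) by lia.
    split; cbn; f_equal; lia.
  - pose proof (amortized_potential_enc_states M K n Rs ss hs) as Hpot.
    pose proof (enc_states_in_range M K n Rs ss hK hR' hs n (le_n n)) as Hrange.
    pose proof (ln2_pow2_mul_gt_1 M K hM hK) as Hak.
    pose proof (log2R_pow2_add_1 M) as Hinit.
    cbn [enc_states] in *. rewrite ubcs_len_init.
    unfold amortized_potential in Hpot.
    destruct (enc_states M K Rs ss n) as [c bs]; cbn [fst snd length] in *.
    rewrite INR_pow2 in Hpot. change (INR 0) with 0 in Hpot.
    pose proof (log2R_S_ge M c (proj1 Hrange)) as Hgrow.
    assert (Hc : (0 < c)%nat) by (pose proof (Nat.pow_nonzero 2 M); lia).
    pose proof (ubcs_len_lt K c bs Hc) as Hlen.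
    apply (amortization_bound _ _ _ (log2R (INR c + 1) - INR M + INR K * INR (length bs))
                              (INR (length bs))); [| exact Hak | lra..].
    apply Rmult_lt_0_compat; [apply ln2_pos | apply pow_lt; lra].
Qed.
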